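(* Let $X_1,\dots,X_t$ be independent symmetric real random variables, and suppose that for some $x>0$ and $p>0$ we have $\Pr[|X_i|<x]>p$ for all $i\in[t]$. Then \[ \Pr\left[\left|\operatorname{median}_{i\in[t]} X_i\right|\ge x\right] < 2e^{-tp^2/2}. \]
   Context: A real random variable $Y$ is symmetric if $Y$ and $-Y$ have the same distribution. For even $t$ the median is the average of the two middle values. *)

From HB Require Import structures.
From mathcomp Require Import all_boot all_order all_algebra.
From mathcomp Require Import all_classical all_reals all_analysis.
Set Implicit Arguments. Unset Strict Implicit. Unset Printing Implicit Defensive.
Import Order.TTheory GRing.Theory Num.Theory.
Local Open Scope classical_set_scope.
Local Open Scope ring_scope.

(* Mutual independence of a finite family of real random variables:
   product rule for preimages of any family of Borel sets (taking
   B i = setT recovers every subfamily). *)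
Definition mutually_independent d (T : measurableType d) (R : realType)
  (P : probability T R) (t : nat) (X : 'I_t -> T -> R) : Prop :=
  forall B : 'I_t -> set R, (forall i, measurable (B i)) ->
    P (\bigcap_(i in [set: 'I_t]) (X i @^-1` B i)) =
    (\prod_(i < t) P (X i @^-1` B i))%E.

Definition symmetric_rv d (T : measurableType d) (R : realType)
  (P : probability T R) (Y : T -> R) : Prop :=
  forall B : set R, measurable B ->
    P (Y @^-1` B) = P ((fun w => - Y w) @^-1` B).

(* Median of a finite list of reals: the middle value of the sorted list
   if its length is odd, the average of the two middle values if even
   (convention: 0 for the empty list). *)
Definition median (R : realType) (s : seq R) : R :=
  let u := sort <=%R s in
  let n := size s in
  if odd n then nth 0 u n./2
  else (nth 0 u n./2.-1 + nth 0 u n./2) / 2.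

From HB Require Import structures.
From mathcomp Require Import all_boot all_order all_algebra.
From mathcomp Require Import all_classical all_reals all_analysis.
From mathcomp Require Import zify ring lra.
Import Order.TTheory GRing.Theory Num.Theory.
Local Open Scope classical_set_scope.
Local Open Scope ring_scope.

(* If |median| >= x then at least half of the X_i are >= x, or at least
   half are <= -x.  By symmetry each X_i lands in either tail with
   probability at most (1 - p)/2, and a Chernoff bound shows that at least
   half of t independent events of probability <= (1 - p)/2 occur with
   probability at most (1 - p^2)^(t/2) < e^(-t p^2/2). *)

Section OrderStatistics.
Variable R : realDomainType.
Implicit Types (s : seq R) (y z : R).

Lemma nth_sort_le s i j : (i <= j)%N -> (j < size s)%N ->
  nth 0 (sort <=%R s) i <= nth 0 (sort <=%R s) j.
Proof.
move=> ij js; apply: (sorted_leq_nth le_trans lexx 0 (sort_le_sorted s)) => //;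
  rewrite inE size_sort //; exact: leq_ltn_trans ij js.
Qed.

Lemma le_nth_sortE s k y : (k < size s)%N ->
  (y <= nth 0 (sort <=%R s) k) = (size s - k <= count (>= y) s)%N.
Proof.
move=> ks; set u := sort <=%R s.
have su : size u = size s by rewrite size_sort.
rewrite -(count_sort <=%R) -/u -[in X in (_ <= X)%N](cat_take_drop k u) count_cat.
apply/idP/idP => [yk|].
  suff /eqP-> : count (>= y) (drop k u) == size (drop k u).
    by rewrite size_drop su leq_addl.
  rewrite -all_count; apply/(all_nthP 0) => j; rewrite size_drop su => jl.
  by rewrite nth_drop (le_trans yk) // nth_sort_le ?leq_addr // -ltn_subRL.
apply: contraTT; rewrite -ltNge => yk; rewrite -ltnNge.
have -> : count (>= y) (take k u) = 0%N.
  apply/eqP; rewrite -leqn0 leqNgt -has_count; apply/(has_nthP 0) => -[j].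
  rewrite size_take su ks => jk; rewrite nth_take // leNgt.
  by rewrite (le_lt_trans _ yk) // nth_sort_le // ltnW.
rewrite (drop_nth 0) ?su //= -/u leNgt yk /= add0n.
by apply: leq_ltn_trans (count_size _ _) _; rewrite size_drop su; lia.
Qed.

Lemma nth_sort_le_count s k z : (k < size s)%N ->
  nth 0 (sort <=%R s) k <= z -> (k.+1 <= count (<= z) s)%N.
Proof.
move=> ks kz; set u := sort <=%R s.
have su : size u = size s by rewrite size_sort.
rewrite -(count_sort <=%R) -/u -[in X in (_ <= X)%N](cat_take_drop k.+1 u) count_cat.
suff /eqP-> : count (<= z) (take k.+1 u) == size (take k.+1 u).
  by rewrite size_takel ?su // leq_addr.
rewrite -all_count; apply/(all_nthP 0) => j; rewrite size_takel ?su // => jl.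
by rewrite /= nth_take // (le_trans _ kz) // nth_sort_le.
Qed.

End OrderStatistics.

Section Median.
Variable R : realType.
Implicit Types (s : seq R) (x z : R).

Lemma median_le_nth_half s : (0 < size s)%N ->
  median s <= nth 0 (sort <=%R s) (size s)./2.
Proof.
move=> s0; rewrite /median; case: ifP => // _.
apply: (midf_le _).2; apply: nth_sort_le; first exact: leq_pred.
by rewrite ltn_half_double -addnn -addn1 leq_add2l.
Qed.

Lemma nth_half_pred_le_median s : (0 < size s)%N ->
  nth 0 (sort <=%R s) (size s).-1./2 <= median s.
Proof.
rewrite /median; case def_n: (size s) => [//|n] _ /=; rewrite uphalf_half.
case: ifP => [/negbTE -> //|/negbT]; rewrite negbK => odd_n.
rewrite odd_n add1n; apply: (midf_le _).1; apply: nth_sort_le => //.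
rewrite def_n ltnS; have := odd_double_half n; rewrite odd_n -mul2n; lia.
Qed.

Lemma median_ge_count s x : x <= median s -> (size s <= 2 * count (>= x) s)%N.
Proof.
have [->//|s0] := posnP (size s).
move=> /le_trans/(_ (median_le_nth_half s s0)); rewrite le_nth_sortE; last first.
  by rewrite ltn_half_double -addnn -addn1 leq_add2l.
have := odd_double_half (size s); rewrite -mul2n.
by move: (count _ _) (odd _) => c [] /=; lia.
Qed.

Lemma median_le_count s z : median s <= z -> (size s <= 2 * count (<= z) s)%N.
Proof.
have [->//|s0] := posnP (size s).
move=> mz; have k_lt : ((size s).-1./2 < size s)%N.
  by rewrite ltn_half_double -addnn; lia.
have := @nth_sort_le_count _ _ _ _ k_lt (le_trans (nth_half_pred_le_median s s0) mz).
have := odd_double_half (size s).-1; rewrite -mul2n.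
by move: (count _ _) (odd _) => c [] /=; lia.
Qed.

End Median.

Lemma count_enum_card (T : finType) (a : pred T) : count a (enum T) = #|a|.
Proof. by rewrite cardE -size_filter /enum_mem filter_predT. Qed.

Definition majority {t} (f : 'I_t -> bool) := (t <= 2 * #|[pred i | f i]|)%N.

Section Chernoff.
Variable R : rcfType.

Lemma prod_tilt_ge1 t (f : 'I_t -> bool) (a : R) : 1 <= a -> majority f ->
  1 <= \prod_(i < t) (if f i then a else a^-1).
Proof.
move=> a1 maj_f; have a0 : 0 < a by apply: lt_le_trans a1.
rewrite (bigID [pred i | f i]) /=.
rewrite (eq_bigr (fun _ => a)); last by move=> i ->.
rewrite [X in _ * X](eq_bigr (fun _ => a^-1)); last by move=> i /negbTE ->.
rewrite !prodr_const; move: maj_f; rewrite /majority.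
have := cardC [pred i | f i]; rewrite card_ord.
set m := #|_|; set n := #|_| => mn tm.
have [k ->] : exists k, m = (n + k)%N by exists (m - n)%N; lia.
by rewrite exprD mulrAC -exprMn mulfV ?gt_eqF // expr1n mul1r exprn_ege1.
Qed.

Lemma tilted_mean_le (p q s : R) : 0 <= p -> p < 1 -> 0 <= q -> q <= (1 - p) / 2 ->
  0 < s -> s ^+ 2 = 1 - p ^+ 2 ->
  q * ((1 + p) / s) + (1 - q) * ((1 + p) / s)^-1 <= s.
Proof.
move=> p0 p1 q0 qp s0 ss.
have p1' : 1 + p != 0 by rewrite gt_eqF // ltr_wpDr.
have sn : s != 0 by rewrite gt_eqF.
have -> : q * ((1 + p) / s) + (1 - q) * ((1 + p) / s)^-1 =
    (q * (1 + p) ^+ 2 + (1 - q) * s ^+ 2) / (s * (1 + p)).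
  by field; apply/andP.
rewrite ss ler_pdivrMr; last by apply: mulr_gt0 => //; lra.
rewrite [s * (s * _)]mulrA -expr2 ss.
have : 0 <= p * (1 + p) * (1 - p - 2 * q).
  by apply: mulr_ge0; [apply: mulr_ge0|]; lra.
nra.
Qed.

(* Exponential tilting: weighting each pattern by [a ^ (#true - #false)],
   which is at least 1 on majority patterns, lets the sum run over all
   patterns, where it factors; [a = (1 + p) / sqrt (1 - p ^ 2)] is the
   weight minimizing each factor. *)
Lemma sum_majority_prod_le t (q : 'I_t -> R) (p : R) : 0 <= p -> p < 1 ->
  (forall i, 0 <= q i) -> (forall i, q i <= (1 - p) / 2) ->
  \sum_(f : {ffun 'I_t -> bool} | majority f)
     \prod_(i < t) (if f i then q i else 1 - q i) <= Num.sqrt (1 - p ^+ 2) ^+ t.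
Proof.
move=> p0 p1 q0 qp; set s := Num.sqrt _.
have s0 : 0 < s by rewrite sqrtr_gt0; nra.
have ss : s ^+ 2 = 1 - p ^+ 2 by rewrite sqr_sqrtr //; nra.
set a := (1 + p) / s.
have a0 : 0 < a by apply: divr_gt0 => //; lra.
have a1 : 1 <= a by rewrite ler_pdivlMr // mul1r; nra.
pose F i (b : bool) := (if b then q i else 1 - q i) * (if b then a else a^-1).
have F0 i b : 0 <= F i b.
  have := q0 i; have := qp i; rewrite /F.
  by case: b => qi qi'; apply: mulr_ge0; rewrite ?invr_ge0; lra.
apply: (@le_trans _ _ (\sum_(f : {ffun 'I_t -> bool} | majority f)
                        \prod_(i < t) F i (f i))).
  apply: ler_sum => f maj_f; rewrite big_split /=.
  rewrite -[X in X <= _]mulr1 ler_wpM2l ?prod_tilt_ge1 //.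
  by apply: prodr_ge0 => i _; case: (f i) => //; have := qp i; lra.
apply: (@le_trans _ _ (\sum_(f : {ffun 'I_t -> bool}) \prod_(i < t) F i (f i))).
  rewrite [X in _ <= X](bigID (fun f : {ffun _ -> bool} => majority f)) /= lerDl.
  by apply: sumr_ge0 => f _; apply: prodr_ge0.
rewrite -(bigA_distr_bigA F) -[in X in _ <= X](card_ord t) -prodr_const.
apply: ler_prod => i _; rewrite big_bool addr_ge0 //=.
exact: tilted_mean_le.
Qed.

End Chernoff.

Lemma le_mu_bigsetU_seq {d} {T : ringOfSetsType d} {R : realFieldType}
    (mu : {content set T -> \bar R}) {I : Type} (r : seq I) (a : pred I)
    (F : I -> set T) :
  (forall i, a i -> measurable (F i)) ->
  (mu (\big[setU/set0]_(i <- r | a i) F i) <= \sum_(i <- r | a i) mu (F i))%E.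
Proof.
move=> mF; elim: r => [|i r IH]; first by rewrite !big_nil measure0.
rewrite !big_cons; case: ifP => // ai.
apply: le_trans (measureU2 _ _ _) _; [exact: mF|exact: bigsetU_measurable|].
exact: leeD.
Qed.

Lemma measurable_pred_eq d (T : measurableType d) (b : T -> bool) (B : bool) :
  measurable [set y | b y] -> measurable [set y | b y = B].
Proof.
case: B => [//|mb].
rewrite (_ : [set y | b y = false] = ~` [set y | b y]); first exact: measurableC.
by apply/seteqP; split => y /=; case: (b y).
Qed.

Section IndependentPatterns.
Context {d : measure_display} {T : measurableType d} {R : realType}.
Context {P : probability T R} {t : nat} (X : 'I_t -> {RV P >-> R}).

Definition pattern_event (b : R -> bool) (f : {ffun 'I_t -> bool}) : set T :=
  \bigcap_(i in [set: 'I_t]) (X i @^-1` [set y | b y = f i]).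

Lemma measurable_pattern_event (b : R -> bool) (f : {ffun 'I_t -> bool}) :
  measurable [set y | b y] -> measurable (pattern_event b f).
Proof.
move=> mb; apply: fin_bigcap_measurable; first exact: finite_finset.
by move=> i _; apply: measurable_funPTI; exact: measurable_pred_eq.
Qed.

Lemma pattern_event_bigsetU (b : R -> bool) (G : pred ('I_t -> bool)) :
  [set w | G (fun i => b (X i w))] =
  \big[setU/set0]_(f : {ffun 'I_t -> bool} | G f) pattern_event b f.
Proof.
apply/seteqP; split => w /=.
  move=> Gw; rewrite -bigcup_seq_cond.
  exists [ffun i => b (X i w)].
    by rewrite /= mem_index_enum /=; congr G: Gw; apply: funext => i; rewrite ffunE.
  by move=> i _; rewrite /= ffunE.
rewrite -bigcup_seq_cond => -[f /= /andP[_ Gf] fw].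
by congr G: Gf; apply: funext => i; rewrite fw.
Qed.

Lemma measurable_pattern (b : R -> bool) (G : pred ('I_t -> bool)) :
  measurable [set y | b y] -> measurable [set w | G (fun i => b (X i w))].
Proof.
move=> mb; rewrite (pattern_event_bigsetU b G).
by apply: bigsetU_measurable => f _; exact: measurable_pattern_event.
Qed.

Hypothesis indep : mutually_independent P (fun i => X i : T -> R).

Lemma prob_pattern_event (b : R -> bool) (f : {ffun 'I_t -> bool}) :
  measurable [set y | b y] -> P (pattern_event b f) = (\prod_(i < t)
    (if f i then P (X i @^-1` [set y | b y]) else 1 - P (X i @^-1` [set y | b y])))%E.
Proof.
move=> mb; rewrite /pattern_event indep; last first.
  by move=> i; exact: measurable_pred_eq.
apply: eq_bigr => i _; case: (f i) => //.
rewrite -probability_setC; last exact: measurable_funPTI.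
by congr (P _); apply/seteqP; split => w /=; case: (b _).
Qed.

Lemma prob_majority_le (b : R -> bool) (p : R) :
  measurable [set y | b y] -> 0 <= p -> p < 1 ->
  (forall i, P (X i @^-1` [set y | b y]) <= ((1 - p) / 2)%:E)%E ->
  (P [set w | majority (fun i => b (X i w))] <= (Num.sqrt (1 - p ^+ 2) ^+ t)%:E)%E.
Proof.
move=> mb p0 p1 hq.
rewrite (pattern_event_bigsetU b majority).
apply: le_trans (le_mu_bigsetU_seq P _ _ _ (fun f _ => measurable_pattern_event b f mb)) _.
pose q i := fine (P (X i @^-1` [set y | b y])).
have qE i : P (X i @^-1` [set y | b y]) = (q i)%:E.
  by rewrite fineK // fin_num_measure //; exact: measurable_funPTI.
have PE f : P (pattern_event b f) = (\prod_(i < t) (if f i then q i else 1 - q i))%:E.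
  by rewrite prob_pattern_event // -prodEFin; apply: eq_bigr => i _; rewrite qE; case: (f i).
rewrite (eq_bigr _ (fun f _ => PE f)) sumEFin lee_fin.
apply: sum_majority_prod_le => // i; last by rewrite -lee_fin -qE.
by apply: fine_ge0; exact: measure_ge0.
Qed.

End IndependentPatterns.

Section MedianOfIndependent.
Context {d : measure_display} {T : measurableType d} {R : realType}.
Context {P : probability T R} {t : nat} (X : 'I_t -> {RV P >-> R}).

Definition sample (w : T) : seq R := [seq X i w | i <- enum 'I_t].

Lemma size_sample w : size (sample w) = t.
Proof. by rewrite size_map size_enum_ord. Qed.

Lemma count_sample (a : pred R) w : count a (sample w) = #|[pred i | a (X i w)]|.
Proof. by rewrite count_map count_enum_card. Qed.

(* The k-th order statistic is at least r iff at least t - k sample points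
   are, which is an event determined by the pattern of the [r <= X i]. *)
Lemma measurable_order_stat k :
  measurable_fun setT (fun w => nth 0 (sort <=%R (sample w)) k).
Proof.
have [kt|tk] := ltnP k t; last first.
  rewrite (_ : (fun w => _) = cst 0); first exact: measurable_cst.
  by apply: funext => w; rewrite nth_default // size_sort size_sample.
apply: (measurability (@measurable_realfun.RGenCInfty.G R)) => [|/= _ [_] [r] -> <-].
  exact: measurable_realfun.RGenCInfty.measurableE.
rewrite setTI.
pose G (g : 'I_t -> bool) := (t - k <= #|[pred i | g i]|)%N.
have -> : (fun w => nth 0 (sort <=%R (sample w)) k) @^-1` `[r, +oo[ =
    [set w | G (fun i => r <= X i w)].
  apply/seteqP; split => w /=;
    by rewrite in_itv /= andbT le_nth_sortE size_sample // count_sample.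
apply: (measurable_pattern X (fun y => r <= y) G).
by rewrite -set_itvcy; exact: measurable_itv.
Qed.

Lemma measurable_median : measurable_fun setT (fun w => median (sample w)).
Proof.
rewrite /median; under eq_fun do rewrite size_sample.
case: (odd t); first exact: measurable_order_stat.
apply: measurable_realfun.measurable_funM; last exact: measurable_cst.
by apply: measurable_realfun.measurable_funD; exact: measurable_order_stat.
Qed.

Hypothesis indep : mutually_independent P (fun i => X i : T -> R).

Lemma prob_median_ge_le (x p : R) : 0 <= p -> p < 1 ->
  (forall i, P [set w | (x <= X i w)%R] <= ((1 - p) / 2)%:E)%E ->
  (P [set w | (x <= median (sample w))%R] <= (Num.sqrt (1 - p ^+ 2) ^+ t)%:E)%E.
Proof.
move=> p0 p1 hq; have mx : measurable [set y : R | x <= y].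
  by rewrite -set_itvcy; exact: measurable_itv.
apply: le_trans (prob_majority_le X indep _ _ mx p0 p1 hq); apply: le_measure.
- by rewrite inE -[X in measurable X]setTI; exact: (measurable_median measurableT _ mx).
- by rewrite inE; exact: (measurable_pattern X _ majority mx).
- by move=> w /median_ge_count; rewrite size_sample count_sample.
Qed.

Lemma prob_median_le_le (z p : R) : 0 <= p -> p < 1 ->
  (forall i, P [set w | (X i w <= z)%R] <= ((1 - p) / 2)%:E)%E ->
  (P [set w | (median (sample w) <= z)%R] <= (Num.sqrt (1 - p ^+ 2) ^+ t)%:E)%E.
Proof.
move=> p0 p1 hq; have mz : measurable [set y : R | y <= z].
  by rewrite -set_itvNyc; exact: measurable_itv.
apply: le_trans (prob_majority_le X indep _ _ mz p0 p1 hq); apply: le_measure.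
- by rewrite inE -[X in measurable X]setTI; exact: (measurable_median measurableT _ mz).
- by rewrite inE; exact: (measurable_pattern X _ majority mz).
- by move=> w /median_le_count; rewrite size_sample count_sample.
Qed.

Lemma prob_abs_median_ge_le (x p : R) : 0 <= p -> p < 1 ->
  (forall i, P [set w | (x <= X i w)%R] <= ((1 - p) / 2)%:E)%E ->
  (forall i, P [set w | (X i w <= - x)%R] <= ((1 - p) / 2)%:E)%E ->
  (P [set w | (x <= `|median (sample w)|)%R] <=
     (2 * Num.sqrt (1 - p ^+ 2) ^+ t)%:E)%E.
Proof.
move=> p0 p1 upper lower.
set E1 := [set w | (x <= median (sample w))%R].
set E2 := [set w | (median (sample w) <= - x)%R].
have -> : [set w | (x <= `|median (sample w)|)%R] = E1 `|` E2.
  by apply/seteqP; split => w /=; rewrite ler_normr lerNr => /orP.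
apply: le_trans (measureU2 _ _ _) _.
- rewrite -[E1]setTI; apply: (measurable_median measurableT [set y | x <= y]).
  by rewrite -set_itvcy; exact: measurable_itv.
- rewrite -[E2]setTI; apply: (measurable_median measurableT [set y | y <= - x]).
  by rewrite -set_itvNyc; exact: measurable_itv.
apply: le_trans (leeD (prob_median_ge_le _ _ p0 p1 upper) (prob_median_le_le _ _ p0 p1 lower)) _.
by rewrite -EFinD mulr_natl mulr2n.
Qed.

End MedianOfIndependent.

Section SymmetricTails.
Context {d : measure_display} {T : measurableType d} {R : realType}.
Context {P : probability T R} {Y : {RV P >-> R}}.
Hypothesis Ysym : symmetric_rv P Y.

Let measurable_upper_tail (x : R) : measurable [set w | x <= Y w].
Proof. by have := measurable_funPTI Y (measurable_itv `[x, +oo[); rewrite set_itvcy. Qed.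

Lemma symmetric_lower_tail (x : R) :
  P [set w | Y w <= - x] = P [set w | x <= Y w].
Proof.
have mx : measurable [set y : R | x <= y] by rewrite -set_itvcy; exact: measurable_itv.
rewrite [RHS](Ysym _ mx); congr (P _).
by apply/seteqP; split => w /=; rewrite lerNr.
Qed.

Lemma prob_abs_lt_symmetric (x : R) : 0 < x ->
  P [set w | `|Y w| < x] = (1 - 2 * fine (P [set w | x <= Y w]))%:E.
Proof.
move=> x0; set A := [set w | x <= Y w]; set B := [set w | Y w <= - x].
have mA : measurable A := measurable_upper_tail x.
have mB : measurable B.
  by have := measurable_funPTI Y (measurable_itv `]-oo, - x]); rewrite set_itvNyc.
have -> : [set w | `|Y w| < x] = ~` (A `|` B).
  apply/seteqP; split => w /=; rewrite ltNge ler_normr lerNr.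
    by move=> /negP AB [Aw|Bw]; apply: AB; rewrite ?Aw ?Bw ?orbT.
  by move=> AB; apply/negP => /orP[Aw|Bw]; apply: AB; [left|right].
have AB0 : A `&` B = set0.
  by apply/seteqP; split => w //= [Aw Bw]; have := le_trans Aw Bw; lra.
rewrite probability_setC; last exact: measurableU.
have -> : P (A `|` B) = (P A + P A)%E.
  by rewrite -[X in (_ = _ + X)%E](symmetric_lower_tail x); exact: measureU.
by rewrite -[P A]fineK ?fin_num_measure // -EFinD /= mulr2n mulrDl mul1r.
Qed.

Lemma symmetric_upper_tail_le (x p : R) : 0 < x ->
  (p%:E < P [set w | (`|Y w| < x)%R])%E ->
  (P [set w | (x <= Y w)%R] <= ((1 - p) / 2)%:E)%E.
Proof.
move=> x0; rewrite prob_abs_lt_symmetric // lte_fin => hp.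
have mA := measurable_upper_tail x.
by rewrite -[P _]fineK ?fin_num_measure // lee_fin; lra.
Qed.

Lemma lt1_of_prob_abs_lt (x p : R) : 0 < x ->
  (p%:E < P [set w | (`|Y w| < x)%R])%E -> p < 1.
Proof.
move=> x0; rewrite prob_abs_lt_symmetric // lte_fin.
by have := fine_ge0 (measure_ge0 P [set w | x <= Y w]); lra.
Qed.

End SymmetricTails.

Lemma sqrt_1Bsqr_lt_expR (R : realType) (p : R) : p != 0 ->
  Num.sqrt (1 - p ^+ 2) < expR (- p ^+ 2 / 2).
Proof.
move=> p0; set e := expR _.
have e0 : 0 < e by exact: expR_gt0.
have ee : e ^+ 2 = expR (- p ^+ 2) by rewrite -expRM_natl; congr expR; field.
rewrite -(gtr0_norm e0) -sqrtr_sqr ltr_sqrt ?exprn_gt0 // ee.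
by apply: expR_gt1Dx; rewrite oppr_eq0 sqrf_eq0.
Qed.

Theorem lemma3p3 (d : measure_display) (T : measurableType d) (R : realType)
  (P : probability T R) (t : nat) (X : 'I_t -> {RV P >-> R}) (x p : R) :
  mutually_independent P (fun i => (X i : T -> R)) ->
  (forall i, symmetric_rv P (X i)) ->
  0 < x -> 0 < p ->
  (forall i, (p%:E < P [set w | (`|X i w| < x)%R])%E) ->
  (P [set w | (x <= `|median [seq X i w | i <- enum 'I_t]|)%R] <
     (2 * expR (- (t%:R * p ^+ 2) / 2))%:E)%E.
Proof.
move=> indep sym x_gt0 p_gt0 hp.
have [t0|t_gt0] := posnP t.
  suff -> : [set w | (x <= `|median [seq X i w | i <- enum 'I_t]|)%R] = set0.
    by rewrite measure0 lte_fin mulr_gt0 ?expR_gt0.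
  apply/seteqP; split => w //=; rewrite -/(sample X w).
  have /size0nil -> : size (sample X w) = 0%N by rewrite size_sample.
  by rewrite /median /= addr0 mul0r normr0 leNgt x_gt0.
have p_lt1 : p < 1 := lt1_of_prob_abs_lt (sym _) _ _ x_gt0 (hp (Ordinal t_gt0)).
have upper i := symmetric_upper_tail_le (sym i) _ _ x_gt0 (hp i).
have lower i : (P [set w | (X i w <= - x)%R] <= ((1 - p) / 2)%:E)%E.
  by rewrite (symmetric_lower_tail (sym i)).
apply: le_lt_trans (prob_abs_median_ge_le X indep _ _ (ltW p_gt0) p_lt1 upper lower) _.
have -> : - (t%:R * p ^+ 2) / 2 = t%:R * (- p ^+ 2 / 2) by field.
rewrite lte_fin ltr_pM2l // expRM_natl.
by rewrite ltrXn2r ?gt_eqF ?sqrtr_ge0 ?expR_ge0 // sqrt_1Bsqr_lt_expR // gt_eqF.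
Qed.
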